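(* Let $\alpha>1$ and let $A=1+\left(\frac{2}{2\alpha-1}\right)^{2\alpha-1}\alpha^\alpha(\alpha-1)^{\alpha-1}$. Then the norm of the Ces\`aro operator on the $\alpha$-Bloch space satisfies $$\|\mathcal{C}\|_{\mathcal{B}^\alpha\to\mathcal{B}^\alpha}\le\begin{cases}\max\left\{A,\dfrac{2^\alpha}{\alpha-1}\right\}, & 1<\alpha\le 2,\\[1em] \max\left\{A,\,2^\alpha\dfrac{2^\alpha-\alpha-1}{(\alpha-1)^2}\right\}, & \alpha>2.\end{cases}$$
   Context: $\mathbb{D}$ is the open unit disc and $H(\mathbb{D})$ the space of analytic functions on $\mathbb{D}$. For $f(z)=\sum_{k\ge0}a_kz^k\in H(\mathbb{D})$ the Ces\`aro operator is $\mathcal{C}(f)(z)=\sum_{n\ge0}\Big(\frac{1}{n+1}\sum_{k=0}^n a_k\Big)z^n=\int_0^1\frac{f(tz)}{1-tz}\,dt$. For $\alpha>0$ the $\alpha$-Bloch space $\mathcal{B}^\alpha$ consists of $f\in H(\mathbb{D})$ with $\sup_{z\in\mathbb{D}}(1-|z|^2)^\alpha|f'(z)|<\infty$, normed by $\|f\|_{\mathcal{B}^\alpha}=|f(0)|+\sup_{z\in\mathbb{D}}(1-|z|^2)^\alpha|f'(z)|$. Operator norms are $\|\mathcal{C}\|_{X\to Y}=\sup\{\|\mathcal{C}f\|_Y:\|f\|_X\le 1\}$. *)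

From Stdlib Require Import Reals.
From Coquelicot Require Import Coquelicot.
Open Scope R_scope.

(* An analytic function f(z) = sum_k a_k z^k on the unit disc is represented
   by its Taylor coefficient sequence a : nat -> C; it belongs to H(D) iff the
   power series converges at every point of the open unit disc. *)
Definition in_HD (a : nat -> C) : Prop :=
  forall z : C, Cmod z < 1 -> ex_pseries a z.

Definition dcoef (a : nat -> C) : nat -> C :=
  fun n => Cmult (RtoC (INR (S n))) (a (S n)).

Definition cesaro (a : nat -> C) : nat -> C :=
  fun n => Cmult (RtoC (/ INR (S n))) (sum_n a n).

Definition bloch_sup (alpha : R) (a : nat -> C) : Rbar :=
  Rbar_lub (fun r : Rbar => exists z : C, Cmod z < 1 /\
     exists w : C, is_pseries (dcoef a) z w /\
       r = Finite (Rpower (1 - Cmod z ^ 2) alpha * Cmod w)).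

(* ||f||_{B^alpha} = |f(0)| + sup ... (+oo when f is not in B^alpha) *)
Definition bloch_norm (alpha : R) (a : nat -> C) : Rbar :=
  Rbar_plus (Finite (Cmod (a O))) (bloch_sup alpha a).

Definition in_bloch (alpha : R) (a : nat -> C) : Prop :=
  in_HD a /\ is_finite (bloch_norm alpha a).

Definition cesaro_opnorm (alpha : R) : Rbar :=
  Rbar_lub (fun r : Rbar => exists a : nat -> C,
     in_bloch alpha a /\ Rbar_le (bloch_norm alpha a) (Finite 1) /\
     r = bloch_norm alpha (cesaro a)).

Definition constA (alpha : R) : R :=
  1 + Rpower (2 / (2 * alpha - 1)) (2 * alpha - 1)
      * Rpower alpha alpha * Rpower (alpha - 1) (alpha - 1).

From Stdlib Require Import Reals Lra Lia.
From Coquelicot Require Import Coquelicot.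
Open Scope R_scope.

(* Let f = sum a_n z^n with |a_0| + S <= 1, where S = sup (1 - |z|^2)^alpha |f'(z)|, let
   g = C f, and let h = f / (1 - z) = sum (a_0 + ... + a_n) z^n.  Since |f'(w)| <= S (1 - |w|)^-alpha,
   integrating along the ray [0, w] gives |f(w) - a_0| <= S/(alpha-1) ((1 - |w|)^(1-alpha) - 1);
   the identities (1 - w) h = f and (1 - w) h' = f' + h then bound h'.  As (z^2 g')' = z h', a
   second integration along [0, z] gives, with r = |z| and c = S/(alpha-1),
     r |g'(z)| <= c ((1 - r)^-alpha - 1) + (|a_0| - c) (1/(1 - r) - 1).
   Multiplying by (1 - r^2)^alpha and using (1 + r)^alpha (1 - r)^(alpha-1) <= A - 1 (weighted
   AM-GM) and (1 + r)^alpha (1 - (1 - r)^(alpha-1)) <= 2^alpha r yields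
     ||g|| <= |a_0| A + S 2^alpha/(alpha-1) <= max(A, 2^alpha/(alpha-1)).
   For alpha > 2 the bound in the statement is weaker still. *)

(** * Real-variable preliminaries *)

Lemma nonincreasing_of_derive_nonpos (f df : R -> R) (a b : R) : a <= b ->
  (forall x, a <= x <= b -> is_derive f x (df x)) ->
  (forall x, a <= x <= b -> df x <= 0) -> f b <= f a.
Proof.
  intros Hab Hd Hn.
  destruct (MVT_gen f a b df) as [c [Hc Heq]];
    rewrite ?Rmin_left, ?Rmax_right in * by lra.
  - intros x Hx. apply Hd. lra.
  - intros x Hx. apply continuity_pt_filterlim, (ex_derive_continuous (V := R_NormedModule)).
    eexists. apply Hd. exact Hx.
  - assert (df c * (b - a) <= 0) by (apply Rmult_le_0_r; [apply Hn | ]; lra).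
    lra.
Qed.

Lemma ln_le_sub_1 y : 0 < y -> ln y <= y - 1.
Proof. intros Hy. pose proof (exp_ineq1_le (ln y)). rewrite exp_ln in *; lra. Qed.

Lemma Rpower_gt_0 x e : 0 < Rpower x e.
Proof. apply exp_pos. Qed.

Lemma Rpower_1_l e : Rpower 1 e = 1.
Proof. unfold Rpower. rewrite ln_1, Rmult_0_r. apply exp_0. Qed.

Lemma Rpower_add_1 x e : 0 < x -> Rpower x (e + 1) = x * Rpower x e.
Proof. intros Hx. rewrite Rpower_plus, Rpower_1 by exact Hx. ring. Qed.

Lemma exp_le_exp x y : x <= y -> exp x <= exp y.
Proof. intros [Hlt | ->]; [left; apply exp_increasing, Hlt | lra]. Qed.

Lemma Rpower_lt_1 x e : 0 < x < 1 -> 0 < e -> Rpower x e < 1.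
Proof. intros Hx He. rewrite <- (Rpower_1_l e). apply Rlt_Rpower_l; lra. Qed.

Lemma is_derive_Rpower x e : 0 < x ->
  is_derive (fun y => Rpower y e) x (e * Rpower x (e - 1)).
Proof. intros Hx. apply is_derive_Reals, derivable_pt_lim_power, Hx. Qed.

Lemma is_derive_Rpower_one_sub_mul r e t : 0 < 1 - t * r ->
  is_derive (fun t => Rpower (1 - t * r) e) t (- r * e * Rpower (1 - t * r) (e - 1)).
Proof.
  intros Hpos.
  assert (Hlin : is_derive (fun t => 1 - t * r) t (- r)) by (auto_derive; [exact I | ring]).
  rewrite Rmult_assoc.
  exact (is_derive_comp (fun y => Rpower y e) _ t _ _ (is_derive_Rpower _ e Hpos) Hlin).
Qed.

Lemma is_derive_radial_majorant e r c1 c2 t : 0 < 1 - t * r ->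
  is_derive (fun t => r * (c1 * Rpower (1 - t * r) (- e) + c2 * Rpower (1 - t * r) (- (1)))) t
    (r * r / (1 - t * r) ^ 2 * (c1 * e * Rpower (1 - t * r) (1 - e) + c2)).
Proof.
  intros Hd.
  replace (r * r / (1 - t * r) ^ 2 * (c1 * e * Rpower (1 - t * r) (1 - e) + c2))
    with (r * (c1 * (- r * - e * Rpower (1 - t * r) (- e - 1))
               + c2 * (- r * - (1) * Rpower (1 - t * r) (- (1) - 1)))).
  - apply (is_derive_scal (fun t => c1 * Rpower (1 - t * r) (- e) + c2 * Rpower (1 - t * r) (- (1)))).
    apply (is_derive_plus (fun t => c1 * Rpower (1 - t * r) (- e)));
      apply (is_derive_scal (fun t => Rpower (1 - t * r) _)), is_derive_Rpower_one_sub_mul, Hd.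
  - set (d := 1 - t * r) in *.
    assert (E1 : Rpower d (1 - e) = d ^ 2 * Rpower d (- e - 1)).
    { replace (1 - e) with (- e - 1 + 1 + 1) by ring. rewrite !Rpower_add_1 by exact Hd. ring. }
    assert (E2 : Rpower d (- (1) - 1) = / d ^ 2).
    { apply (Rmult_eq_reg_l (d ^ 2)); [ | apply pow_nonzero; lra].
      rewrite Rinv_r by (apply pow_nonzero; lra).
      replace (d ^ 2 * Rpower d (- (1) - 1)) with (Rpower d (- (1) - 1 + 1 + 1))
        by (rewrite !Rpower_add_1 by exact Hd; ring).
      replace (- (1) - 1 + 1 + 1) with 0 by ring. apply Rpower_O, Hd. }
    rewrite E1, E2. field. lra.
Qed.

Lemma Rpower_le_bernoulli x c : 0 < x -> 0 <= c <= 1 -> Rpower x c <= 1 + c * (x - 1).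
Proof.
  intros Hx Hc. set (q := 1 + c * (x - 1)).
  assert (Hq : 0 < q) by (unfold q; nra).
  rewrite <- (exp_ln q) by exact Hq. apply exp_le_exp.
  (* weighted form of [ln y <= y - 1] at [y = x / q] and [y = 1 / q] *)
  pose proof (ln_le_sub_1 (x / q) ltac:(apply Rdiv_lt_0_compat; lra)) as Hxq.
  pose proof (ln_le_sub_1 (/ q) ltac:(apply Rinv_0_lt_compat; lra)) as Hiq.
  rewrite ln_div in Hxq by lra. rewrite ln_Rinv in Hiq by lra.
  assert (c * (ln x - ln q) <= c * (x / q - 1)) by (apply Rmult_le_compat_l; lra).
  assert ((1 - c) * - ln q <= (1 - c) * (/ q - 1)) by (apply Rmult_le_compat_l; lra).
  assert (c * (x / q - 1) + (1 - c) * (/ q - 1) = 0) by (unfold q in *; field; lra).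
  lra.
Qed.

Lemma one_add_mul_le_Rpower u e : 0 < u -> 0 <= e -> 1 + e * (1 - / u) <= Rpower u e.
Proof.
  intros Hu He. eapply Rle_trans; [ | apply exp_ineq1_le].
  pose proof (ln_le_sub_1 (/ u) ltac:(apply Rinv_0_lt_compat, Hu)) as Hl.
  rewrite ln_Rinv in Hl by exact Hu.
  assert (e * (1 - / u) <= e * ln u) by (apply Rmult_le_compat_l; lra).
  lra.
Qed.

Lemma affine_le_Rpower_pred_mul u b : 0 < u < 1 -> 0 < b ->
  1 - b + b * u <= Rpower u (b - 1) * (2 * b * (1 - u) ^ 2 + u).
Proof.
  intros Hu Hb.
  assert (Hsq : 0 <= (1 - u) ^ 2) by apply pow2_ge_0.
  assert (HR : 0 < 2 * b * (1 - u) ^ 2 + u) by nra.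
  destruct (Rle_lt_dec b 1) as [Hb1 | Hb1].
  - pose proof (Rpower_le_bernoulli u (1 - b) ltac:(lra) ltac:(lra)) as Hq.
    set (q := 1 + (1 - b) * (u - 1)) in *.
    assert (Hq0 : 0 < q) by (unfold q; nra).
    assert (Hinv : / q <= Rpower u (b - 1)).
    { replace (b - 1) with (- (1 - b)) by ring. rewrite Rpower_Ropp.
      apply Rinv_le_contravar; [apply Rpower_gt_0 | exact Hq]. }
    assert (Hfac : 2 * b * (1 - u) ^ 2 + u - (1 - b + b * u) * q = b * (1 + b) * (1 - u) ^ 2)
      by (unfold q; ring).
    apply Rle_trans with (/ q * (2 * b * (1 - u) ^ 2 + u)); [ | apply Rmult_le_compat_r; lra].
    apply (Rmult_le_reg_l q); [exact Hq0 | ].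
    rewrite <- Rmult_assoc, Rinv_r by lra. nra.
  - pose proof (one_add_mul_le_Rpower u (b - 1) ltac:(lra) ltac:(lra)) as Hp.
    replace (1 + (b - 1) * (1 - / u)) with ((1 - b + b * u) / u) in Hp by (field; lra).
    pose proof (Rpower_gt_0 u (b - 1)).
    destruct (Rle_lt_dec (1 - b + b * u) 0); [nra | ].
    apply Rle_trans with ((1 - b + b * u) / u * (2 * b * (1 - u) ^ 2 + u));
      [ | apply Rmult_le_compat_r; lra].
    replace ((1 - b + b * u) / u * (2 * b * (1 - u) ^ 2 + u))
      with ((1 - b + b * u) + (1 - b + b * u) * (2 * b * (1 - u) ^ 2) / u) by (field; lra).
    assert (0 <= (1 - b + b * u) * (2 * b * (1 - u) ^ 2) / u)
      by (apply Rdiv_le_0_compat; [apply Rmult_le_pos; nra | lra]).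
    lra.
Qed.

Definition log_defect (b u : R) : R :=
  ln (1 - Rpower u b) - ln (1 - u) + (b + 1) * ln (1 - u / 2).

Definition log_defect' (b u : R) : R :=
  - (b * Rpower u (b - 1)) / (1 - Rpower u b) + 1 / (1 - u) - (b + 1) / (2 - u).

Lemma is_derive_log_defect b u : 0 < b -> 0 < u < 1 ->
  is_derive (log_defect b) u (log_defect' b u).
Proof.
  intros Hb Hu. pose proof (Rpower_lt_1 u b Hu Hb).
  unfold log_defect, log_defect'. auto_derive.
  - repeat split; try lra. eexists. apply is_derive_Rpower. lra.
  - replace (Derive (fun x => Rpower x b) u) with (b * Rpower u (b - 1))
      by (symmetry; apply is_derive_unique, is_derive_Rpower; lra).
    field. lra.
Qed.

Lemma log_defect'_nonpos b u : 0 < b -> 0 < u < 1 -> log_defect' b u <= 0.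
Proof.
  intros Hb Hu. pose proof (Rpower_lt_1 u b Hu Hb).
  pose proof (affine_le_Rpower_pred_mul u b Hu Hb).
  assert (Hp : Rpower u b = u * Rpower u (b - 1))
    by (rewrite <- Rpower_add_1 by lra; f_equal; ring).
  unfold log_defect'. rewrite Hp in *. set (p := Rpower u (b - 1)) in *.
  replace (- (b * p) / (1 - u * p) + 1 / (1 - u) - (b + 1) / (2 - u))
    with (((1 - b + b * u) - p * (2 * b * (1 - u) ^ 2 + u)) / ((1 - u * p) * (1 - u) * (2 - u)))
    by (field; repeat split; lra).
  apply Rmult_le_0_r; [lra | left; apply Rinv_0_lt_compat].
  apply Rmult_lt_0_compat; [apply Rmult_lt_0_compat | ]; lra.
Qed.

Lemma log_defect_le_2_mul b e : 0 < b -> 0 < e <= 1 / 2 -> log_defect b e <= 2 * e.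
Proof.
  intros Hb He. pose proof (Rpower_lt_1 e b ltac:(lra) Hb). pose proof (Rpower_gt_0 e b).
  unfold log_defect.
  assert (ln (1 - Rpower e b) <= 0) by (rewrite <- ln_1; apply ln_le; lra).
  assert (ln (1 - e / 2) <= 0) by (rewrite <- ln_1; apply ln_le; lra).
  assert (- ln (1 - e) <= 2 * e).
  { rewrite <- ln_Rinv by lra.
    pose proof (ln_le_sub_1 (/ (1 - e)) ltac:(apply Rinv_0_lt_compat; lra)).
    replace (/ (1 - e) - 1) with (e / (1 - e)) in * by (field; lra).
    assert (e / (1 - e) <= 2 * e) by (apply Rle_div_l; nra).
    lra. }
  nra.
Qed.

(* [log_defect b] is nonincreasing on [(0, 1)] and tends to [0] at [0+]. *)
Lemma log_defect_nonpos b u : 0 < b -> 0 < u < 1 -> log_defect b u <= 0.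
Proof.
  intros Hb Hu.
  assert (Hmono : forall e, 0 < e <= u -> log_defect b u <= log_defect b e).
  { intros e He. apply (nonincreasing_of_derive_nonpos _ (log_defect' b)); [lra | | ];
      intros x Hx; [apply is_derive_log_defect | apply log_defect'_nonpos]; lra. }
  destruct (Rle_lt_dec (log_defect b u) 0) as [H | H]; [exact H | exfalso].
  set (e := Rmin (Rmin u (1 / 2)) (log_defect b u / 4)).
  assert (0 < e) by (unfold e; repeat apply Rmin_pos; lra).
  assert (e <= Rmin u (1 / 2) /\ e <= log_defect b u / 4) as [He1 He2]
    by (split; [apply Rmin_l | apply Rmin_r]).
  pose proof (Rmin_l u (1 / 2)). pose proof (Rmin_r u (1 / 2)).
  pose proof (Hmono e ltac:(lra)). pose proof (log_defect_le_2_mul b e Hb ltac:(lra)).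
  lra.
Qed.

Lemma Rpower_one_sub_half_mul_le u b : 0 < u < 1 -> 0 < b ->
  Rpower (1 - u / 2) (b + 1) * (1 - Rpower u b) <= 1 - u.
Proof.
  intros Hu Hb. pose proof (log_defect_nonpos b u Hb Hu) as H. unfold log_defect in H.
  pose proof (Rpower_lt_1 u b Hu Hb).
  rewrite <- (exp_ln (1 - u)), <- (exp_ln (1 - Rpower u b)) by lra.
  unfold Rpower at 1. rewrite <- exp_plus. apply exp_le_exp. lra.
Qed.

Lemma Rpower_one_add_mul_one_sub_Rpower_le alpha r : 1 < alpha -> 0 < r < 1 ->
  Rpower (1 + r) alpha * (1 - Rpower (1 - r) (alpha - 1)) <= Rpower 2 alpha * r.
Proof.
  intros Ha Hr.
  pose proof (Rpower_one_sub_half_mul_le (1 - r) (alpha - 1) ltac:(lra) ltac:(lra)) as H.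
  replace (alpha - 1 + 1) with alpha in H by ring.
  replace (1 - (1 - r) / 2) with ((1 + r) / 2) in H by field.
  replace (1 + r) with (2 * ((1 + r) / 2)) by field.
  rewrite <- Rpower_mult_distr, Rmult_assoc by lra.
  apply Rmult_le_compat_l; [apply Rlt_le, Rpower_gt_0 | lra].
Qed.

Definition constK (alpha : R) : R :=
  Rpower (2 / (2 * alpha - 1)) (2 * alpha - 1) * Rpower alpha alpha
  * Rpower (alpha - 1) (alpha - 1).

Lemma constA_constK alpha : constA alpha = 1 + constK alpha.
Proof. reflexivity. Qed.

(* Weighted AM-GM with weights [alpha] and [alpha - 1]; equality at [r = 1 / (2 alpha - 1)]. *)
Lemma Rpower_one_add_mul_Rpower_one_sub_le_constK alpha r : 1 < alpha -> 0 <= r < 1 ->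
  Rpower (1 + r) alpha * Rpower (1 - r) (alpha - 1) <= constK alpha.
Proof.
  intros Ha Hr. unfold constK, Rpower. rewrite <- !exp_plus. apply exp_le_exp.
  set (y1 := (1 + r) * (2 * alpha - 1) / (2 * alpha)).
  set (y2 := (1 - r) * (2 * alpha - 1) / (2 * (alpha - 1))).
  pose proof (ln_le_sub_1 y1 ltac:(unfold y1; apply Rdiv_lt_0_compat; nra)).
  pose proof (ln_le_sub_1 y2 ltac:(unfold y2; apply Rdiv_lt_0_compat; nra)).
  assert (alpha * (y1 - 1) + (alpha - 1) * (y2 - 1) = 0) by (unfold y1, y2; field; lra).
  unfold y1, y2 in *.
  rewrite !ln_div, !ln_mult in * by nra.
  nra.
Qed.

Lemma constK_ge_1 alpha : 1 < alpha -> 1 <= constK alpha.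
Proof.
  intros Ha. pose proof (Rpower_one_add_mul_Rpower_one_sub_le_constK alpha 0 Ha ltac:(lra)) as H.
  rewrite Rplus_0_r, Rminus_0_r, !Rpower_1_l in H. lra.
Qed.

Lemma weighted_bound_of_radial_bound alpha r A c X : 1 < alpha -> 0 < r < 1 -> 0 <= A -> 0 <= c ->
  r * X <= c * (Rpower (1 - r) (- alpha) - 1) + (A - c) * (/ (1 - r) - 1) ->
  Rpower (1 - r ^ 2) alpha * X <= A * constK alpha + c * Rpower 2 alpha.
Proof.
  intros Ha Hr HA Hc HX.
  pose proof (Rpower_one_add_mul_Rpower_one_sub_le_constK alpha r Ha ltac:(lra)) as HK.
  pose proof (Rpower_one_add_mul_one_sub_Rpower_le alpha r Ha Hr) as H2.
  set (u := 1 - r) in *. set (Q := Rpower u (alpha - 1)) in *. set (T := Rpower (1 + r) alpha) in *.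
  assert (Hu : 0 < u < 1) by (unfold u; lra).
  assert (HQ : 0 < Q) by apply Rpower_gt_0. assert (HT : 0 < T) by apply Rpower_gt_0.
  assert (Hpow : Rpower u alpha = u * Q)
    by (unfold Q; rewrite <- Rpower_add_1 by lra; f_equal; ring).
  replace (Rpower (1 - r ^ 2) alpha) with (T * (u * Q))
    by (rewrite <- Hpow; unfold T; rewrite Rpower_mult_distr by lra; f_equal; unfold u; ring).
  rewrite Rpower_Ropp, Hpow in HX.
  apply (Rmult_le_reg_l r); [lra | ].
  replace (r * (T * (u * Q) * X)) with (T * (u * Q) * (r * X)) by ring.
  assert (HTuQ : 0 <= T * (u * Q)) by (apply Rmult_le_pos; [ | apply Rmult_le_pos]; lra).
  eapply Rle_trans; [apply Rmult_le_compat_l; [exact HTuQ | exact HX] | ].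
  replace (T * (u * Q) * (c * (/ (u * Q) - 1) + (A - c) * (/ u - 1)))
    with (c * (T * (1 - Q)) + A * (r * (T * Q))) by (unfold u in *; field; lra).
  assert (c * (T * (1 - Q)) <= c * (Rpower 2 alpha * r)) by (apply Rmult_le_compat_l; lra).
  assert (A * (r * (T * Q)) <= A * (r * constK alpha))
    by (apply Rmult_le_compat_l; [ | apply Rmult_le_compat_l]; lra).
  lra.
Qed.

(** * Coefficient sequences with radius of convergence at least 1 *)

Lemma Cmod_pow_n (z : C) n : Cmod (@pow_n C_AbsRing z n) = Cmod z ^ n.
Proof.
  induction n as [|n IH]; simpl; [apply Cmod_1 | ].
  change (Cmod (z * @pow_n C_AbsRing z n)%C = Cmod z * Cmod z ^ n).
  rewrite Cmod_mult, IH. reflexivity.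
Qed.

Lemma Cmod_INR n : Cmod (RtoC (INR n)) = INR n.
Proof. rewrite Cmod_R. apply Rabs_pos_eq, pos_INR. Qed.

Lemma Cmod_scal_R (t : R) (z : C) : 0 <= t -> Cmod (RtoC t * z)%C = t * Cmod z.
Proof. intros Ht. rewrite Cmod_mult, Cmod_R, Rabs_pos_eq by exact Ht. reflexivity. Qed.

Lemma ex_series_terms_bounded (u : nat -> C) : ex_series u -> exists M, forall n, Cmod (u n) <= M.
Proof.
  intros [l Hl]. destruct (filterlim_bounded (sum_n u) (ex_intro _ l Hl)) as [M HM].
  change (forall n, Cmod (sum_n u n) <= M) in HM.
  exists (2 * M). intros [|n].
  - pose proof (HM O) as H0. rewrite sum_O in H0. pose proof (Cmod_ge_0 (u O)). lra.
  - replace (u (S n)) with (sum_n u (S n) - sum_n u n)%C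
      by (rewrite sum_Sn; change (sum_n u n + u (S n) - sum_n u n = u (S n))%C; ring).
    pose proof (Cmod_triangle (sum_n u (S n)) (- sum_n u n)%C).
    rewrite Cmod_opp in *. pose proof (HM n). pose proof (HM (S n)). unfold Cminus. lra.
Qed.

Lemma INR_succ_mul_pow_bounded q : 0 <= q < 1 -> exists K, forall n, INR (S n) * q ^ n <= K.
Proof.
  intros Hq. destruct (Req_dec q 0) as [-> | Hq0].
  { exists 1. intros [|n]; simpl; lra. }
  set (d := / q - 1).
  assert (Hd : 0 < d).
  { unfold d. assert (1 < / q) by (rewrite <- Rinv_1; apply Rinv_lt_contravar; lra). lra. }
  assert (Hbern : forall n, 1 + INR n * d <= (/ q) ^ n).
  { replace (/ q) with (1 + d) by (unfold d; ring).
    induction n as [|n IH]; [simpl; lra | ].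
    rewrite S_INR. simpl. pose proof (pos_INR n). nra. }
  clearbody d. exists (1 + / d). intros n. specialize (Hbern n). pose proof (pos_INR n).
  replace (q ^ n) with (/ (/ q) ^ n) by (rewrite pow_inv, Rinv_inv; reflexivity).
  rewrite S_INR.
  apply Rle_trans with ((INR n + 1) / (1 + INR n * d)).
  - unfold Rdiv. apply Rmult_le_compat_l; [lra | ]. apply Rinv_le_contravar; nra.
  - apply Rle_div_l; [nra | ]. pose proof (Rinv_l d (Rgt_not_eq _ _ Hd)).
    pose proof (Rinv_0_lt_compat d Hd). nra.
Qed.

Definition radius_ge_1 (b : nat -> C) : Prop :=
  forall rho, 0 < rho < 1 -> exists M, forall n, Cmod (b n) * rho ^ n <= M.

Lemma radius_ge_1_of_in_HD a : in_HD a -> radius_ge_1 a.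
Proof.
  intros Ha rho Hr.
  assert (Hc : Cmod (RtoC rho) < 1) by (rewrite Cmod_R, Rabs_pos_eq; lra).
  destruct (ex_series_terms_bounded _ (Ha _ Hc)) as [M HM].
  exists M. intros n. specialize (HM n).
  change (Cmod (@pow_n C_AbsRing (RtoC rho) n * a n)%C <= M) in HM.
  rewrite Cmod_mult, Cmod_pow_n, Cmod_R, Rabs_pos_eq in HM by lra. lra.
Qed.

Lemma radius_ge_1_abs_summable b w : radius_ge_1 b -> Cmod w < 1 ->
  ex_series (fun n => Cmod (b n) * Cmod w ^ n).
Proof.
  intros Hb Hw. set (rho := (1 + Cmod w) / 2). pose proof (Cmod_ge_0 w).
  destruct (Hb rho ltac:(unfold rho; lra)) as [M HM].
  set (q := Cmod w / rho).
  assert (Hq : 0 <= q < 1).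
  { unfold q, rho. split; [apply Rdiv_le_0_compat | apply Rlt_div_l]; lra. }
  apply (ex_series_le (V := R_CompleteNormedModule) _ (fun n => M * q ^ n)).
  - intros n. change (Rabs (Cmod (b n) * Cmod w ^ n) <= M * q ^ n).
    rewrite Rabs_pos_eq by (apply Rmult_le_pos; [apply Cmod_ge_0 | apply pow_le; lra]).
    replace (Cmod w) with (rho * q) by (unfold q, rho; field; lra).
    rewrite Rpow_mult_distr, <- Rmult_assoc.
    apply Rmult_le_compat_r; [apply pow_le; lra | apply HM].
  - apply (ex_series_scal (V := R_NormedModule) M (fun n => q ^ n)).
    apply ex_series_geom. rewrite Rabs_pos_eq; lra.
Qed.

Lemma radius_ge_1_ex_pseries b w : radius_ge_1 b -> Cmod w < 1 -> ex_pseries b w.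
Proof.
  intros Hb Hw.
  apply (ex_series_le (V := C_CompleteNormedModule) _ (fun n => Cmod (b n) * Cmod w ^ n));
    [intros n | exact (radius_ge_1_abs_summable b w Hb Hw)].
  change (Cmod (@pow_n C_AbsRing w n * b n)%C <= Cmod (b n) * Cmod w ^ n).
  rewrite Cmod_mult, Cmod_pow_n, Rmult_comm. apply Rle_refl.
Qed.

Lemma radius_ge_1_le b c K : radius_ge_1 c -> 0 <= K ->
  (forall n, Cmod (b n) <= K * Cmod (c n)) -> radius_ge_1 b.
Proof.
  intros Hc HK Hbc rho Hr. destruct (Hc rho Hr) as [M HM]. exists (K * M). intros n.
  specialize (HM n). specialize (Hbc n). pose proof (pow_le rho n ltac:(lra)).
  apply Rle_trans with (K * Cmod (c n) * rho ^ n); [apply Rmult_le_compat_r; assumption | ].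
  rewrite Rmult_assoc. apply Rmult_le_compat_l; assumption.
Qed.

(* A bound at radius [r' = (1 + rho) / 2] absorbs a linear factor at radius [rho]. *)
Lemma radius_ge_1_of_linear_growth b :
  (forall r, 0 < r < 1 -> exists M, forall n, Cmod (b n) * r ^ n <= INR (S n) * M) ->
  radius_ge_1 b.
Proof.
  intros Hb rho Hr. set (r' := (1 + rho) / 2).
  destruct (Hb r' ltac:(unfold r'; lra)) as [M HM].
  set (q := rho / r').
  assert (Hq : 0 <= q < 1).
  { unfold q, r'. split; [apply Rdiv_le_0_compat | apply Rlt_div_l]; lra. }
  destruct (INR_succ_mul_pow_bounded q Hq) as [K HK].
  assert (HM0 : 0 <= M).
  { specialize (HM O). simpl in HM. pose proof (Cmod_ge_0 (b O)). lra. }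
  exists (K * M). intros n. specialize (HM n). specialize (HK n).
  replace rho with (r' * q) by (unfold q, r'; field; lra).
  rewrite Rpow_mult_distr, <- Rmult_assoc.
  apply Rle_trans with (INR (S n) * M * q ^ n);
    [apply Rmult_le_compat_r; [apply pow_le; lra | exact HM] | ].
  replace (INR (S n) * M * q ^ n) with (INR (S n) * q ^ n * M) by ring.
  apply Rmult_le_compat_r; assumption.
Qed.

Lemma radius_ge_1_dcoef a : radius_ge_1 a -> radius_ge_1 (dcoef a).
Proof.
  intros Ha. apply radius_ge_1_of_linear_growth. intros r Hr.
  destruct (Ha r Hr) as [M HM]. exists (M / r). intros n. specialize (HM (S n)).
  unfold dcoef. rewrite Cmod_mult, Cmod_INR, Rmult_assoc. apply Rmult_le_compat_l; [apply pos_INR | ].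
  apply (Rmult_le_reg_r r); [lra | ].
  replace (M / r * r) with M by (field; lra). simpl in HM. lra.
Qed.

Lemma radius_ge_1_partial_sums a : radius_ge_1 a -> radius_ge_1 (sum_n a).
Proof.
  intros Ha. apply radius_ge_1_of_linear_growth. intros r Hr.
  destruct (Ha r Hr) as [M HM]. exists M.
  induction n as [|n IH].
  - rewrite sum_O. simpl. specialize (HM O). simpl in HM. lra.
  - rewrite sum_Sn. change (plus (sum_n a n) (a (S n))) with (sum_n a n + a (S n))%C.
    pose proof (Cmod_triangle (sum_n a n) (a (S n))).
    pose proof (HM (S n)). pose proof (Cmod_ge_0 (sum_n a n)). pose proof (pow_le r n ltac:(lra)).
    assert (r ^ S n <= r ^ n) by (simpl; nra).
    assert (Cmod (sum_n a n) * r ^ S n <= Cmod (sum_n a n) * r ^ n)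
      by (apply Rmult_le_compat_l; assumption).
    rewrite (S_INR (S n)).
    apply Rle_trans with ((Cmod (sum_n a n) + Cmod (a (S n))) * r ^ S n);
      [apply Rmult_le_compat_r; [apply pow_le; lra | assumption] | lra].
Qed.

Lemma radius_ge_1_cesaro a : radius_ge_1 a -> radius_ge_1 (cesaro a).
Proof.
  intros Ha. apply (radius_ge_1_le _ (sum_n a) 1); [apply radius_ge_1_partial_sums, Ha | lra | ].
  intros n. unfold cesaro. rewrite Cmod_mult, Cmod_R, Rmult_1_l.
  rewrite Rabs_pos_eq by (left; apply Rinv_0_lt_compat, lt_0_INR; lia).
  pose proof (Cmod_ge_0 (sum_n a n)).
  assert (/ INR (S n) <= 1).
  { rewrite <- Rinv_1. apply Rinv_le_contravar; [lra | ]. rewrite S_INR. pose proof (pos_INR n). lra. }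
  nra.
Qed.

Lemma radius_ge_1_PS_incr_1 e : radius_ge_1 e -> radius_ge_1 (PS_incr_1 e).
Proof.
  intros He rho Hr. destruct (He rho Hr) as [M HM]. exists M.
  assert (HM0 : 0 <= M) by (specialize (HM O); simpl in HM; pose proof (Cmod_ge_0 (e O)); lra).
  intros [|n]; simpl.
  - change (Cmod 0 * 1 <= M). rewrite Cmod_0. lra.
  - specialize (HM n). pose proof (Cmod_ge_0 (e n)). pose proof (pow_le rho n ltac:(lra)).
    assert (0 <= Cmod (e n) * rho ^ n) by (apply Rmult_le_pos; assumption).
    replace (Cmod (e n) * (rho * rho ^ n)) with (rho * (Cmod (e n) * rho ^ n)) by ring.
    nra.
Qed.

(** * Estimates along rays *)

Lemma Re_plus (x y : C) : Re (x + y)%C = Re x + Re y.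
Proof. destruct x, y. reflexivity. Qed.

Lemma Re_mult_scal_R (v x : C) (s : R) : Re (v * (RtoC s * x))%C = s * Re (v * x)%C.
Proof. destruct v, x. unfold Re, Cmult, RtoC; simpl. ring. Qed.

Lemma pow_n_scal_R (t : R) (z : C) k :
  @pow_n C_AbsRing (RtoC t * z)%C k = (RtoC (t ^ k) * @pow_n C_AbsRing z k)%C.
Proof.
  induction k as [|k IH]; simpl.
  - change (@eq C (RtoC 1) (RtoC 1 * RtoC 1)%C). ring.
  - change (@eq C (RtoC t * z * @pow_n C_AbsRing (RtoC t * z)%C k)%C
                  (RtoC (t * t ^ k) * (z * @pow_n C_AbsRing z k))%C).
    rewrite IH, RtoC_mult. ring.
Qed.

Lemma sum_n_Re_mult (u : nat -> C) v n :
  sum_n (fun k => Re (v * u k)%C) n = Re (v * sum_n u n)%C.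
Proof.
  induction n as [|n IH]; [rewrite !sum_O; reflexivity | ].
  rewrite !sum_Sn, IH.
  change (plus (sum_n u n) (u (S n))) with (sum_n u n + u (S n))%C.
  rewrite Cmult_plus_distr_l, Re_plus. reflexivity.
Qed.

Lemma continuous_Re_mult (v l : C) :
  filterlim (fun x : C => Re (v * x)%C) (locally l) (locally (Re (v * l)%C)).
Proof.
  destruct v as [v1 v2], l as [l1 l2].
  assert (Hlin : continuous (T := prod_UniformSpace R_UniformSpace R_UniformSpace)
                   (fun x : R * R => minus (v1 * fst x) (v2 * snd x)) (l1, l2)).
  { apply (continuous_minus (V := R_NormedModule));
      apply (continuous_mult (K := R_AbsRing)); apply continuous_const || apply continuous_fst
        || apply continuous_snd. }
  eapply filterlim_ext; [ | exact Hlin].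
  intros [x1 x2]. unfold minus, plus, opp; simpl. ring.
Qed.

(* The real power series in [t] of [Re (v * f (t z))], where [f] has coefficients [b]. *)
Definition ray_coef (v : C) (b : nat -> C) (z : C) (n : nat) : R :=
  Re (v * (b n * @pow_n C_AbsRing z n))%C.

Lemma is_pseries_ray_coef b z v t l : is_pseries b (RtoC t * z)%C l ->
  is_pseries (ray_coef v b z) t (Re (v * l)%C).
Proof.
  intros H. unfold is_pseries, is_series.
  eapply filterlim_ext; [ | exact (filterlim_comp _ _ _ _ _ _ _ _ H (continuous_Re_mult v l))].
  intros n. cbv beta. rewrite <- sum_n_Re_mult. apply sum_n_ext. intros k.
  change (Re (v * (@pow_n C_AbsRing (RtoC t * z)%C k * b k))%C = t ^ k * ray_coef v b z k).
  rewrite pow_n_scal_R. unfold ray_coef.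
  rewrite <- Re_mult_scal_R. f_equal. ring.
Qed.

Lemma CV_radius_ray_coef v b z : radius_ge_1 b -> Cmod z < 1 ->
  Rbar_lt 1 (CV_radius (ray_coef v b z)).
Proof.
  intros Hb Hz. pose proof (Cmod_ge_0 z).
  set (t0 := 2 / (1 + Cmod z)).
  assert (Ht0 : 1 < t0) by (unfold t0; apply Rlt_div_r; lra).
  assert (Hq : Cmod (RtoC (t0 * Cmod z)) < 1).
  { rewrite Cmod_R, Rabs_pos_eq by (apply Rmult_le_pos; lra).
    unfold t0. apply (Rmult_lt_reg_r (1 + Cmod z)); [lra | ]. field_simplify; lra. }
  assert (Hdisk : CV_disk (ray_coef v b z) t0).
  { apply (ex_series_le (V := R_CompleteNormedModule) _
      (fun n => Cmod v * (Cmod (b n) * Cmod (RtoC (t0 * Cmod z)) ^ n))).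
    - intros n. change (Rabs (Rabs (ray_coef v b z n * t0 ^ n))
                        <= Cmod v * (Cmod (b n) * Cmod (RtoC (t0 * Cmod z)) ^ n)).
      rewrite Rabs_Rabsolu, Rabs_mult, Cmod_R, (Rabs_pos_eq (t0 * Cmod z)),
        (Rabs_pos_eq (t0 ^ n)), Rpow_mult_distr by (apply pow_le || apply Rmult_le_pos; lra).
      unfold ray_coef. eapply Rle_trans;
        [apply Rmult_le_compat_r; [apply pow_le; lra | apply re_le_Cmod] | ].
      rewrite !Cmod_mult, Cmod_pow_n. apply Req_le. ring.
    - apply (ex_series_scal (V := R_NormedModule) (Cmod v)), radius_ge_1_abs_summable; assumption. }
  unfold CV_radius. destruct (Lub_Rbar_correct (CV_disk (ray_coef v b z))) as [Hub _].
  specialize (Hub t0 Hdisk). destruct (Lub_Rbar (CV_disk (ray_coef v b z))); simpl in *; lra.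
Qed.

Lemma PS_derive_ray_coef v b z n :
  PS_derive (ray_coef v b z) n = ray_coef (v * z)%C (dcoef b) z n.
Proof.
  unfold PS_derive, ray_coef, dcoef.
  change (@pow_n C_AbsRing z (S n)) with (z * @pow_n C_AbsRing z n)%C.
  rewrite <- Re_mult_scal_R. f_equal. ring.
Qed.

Lemma is_pseries_C_unique (b : nat -> C) (z l1 l2 : C) :
  is_pseries b z l1 -> is_pseries b z l2 -> l1 = l2.
Proof. apply (filterlim_locally_unique (V := C_NormedModule)). Qed.

(* Differentiate [t |-> Re (v * f (t z)) - G t] on [[0, 1]]. *)
Lemma Re_mult_pseries_sub_le (b : nat -> C) (z v l : C) (G dG : R -> R) :
  radius_ge_1 b -> Cmod z < 1 -> is_pseries b z l ->
  (forall t, 0 <= t <= 1 -> is_derive G t (dG t)) ->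
  (forall t w, 0 <= t <= 1 -> is_pseries (dcoef b) (RtoC t * z)%C w ->
     Re (v * z * w)%C <= dG t) ->
  Re (v * (l - b O))%C <= G 1 - G 0.
Proof.
  intros Hb Hz Hl HG Hd.
  set (c := ray_coef v b z).
  assert (Hrad : forall t, 0 <= t <= 1 -> Rbar_lt (Rabs t) (CV_radius c)).
  { intros t Ht. pose proof (CV_radius_ray_coef v b z Hb Hz) as Hc. fold c in Hc.
    rewrite Rabs_pos_eq by lra. destruct (CV_radius c); simpl in *; lra. }
  assert (Hmv : PSeries c 1 - G 1 <= PSeries c 0 - G 0).
  { apply (nonincreasing_of_derive_nonpos (fun t => PSeries c t - G t)
      (fun t => PSeries (PS_derive c) t - dG t)); [lra | | ].
    - intros t Ht. apply (is_derive_minus (V := R_NormedModule));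
        [apply is_derive_PSeries, Hrad | apply HG]; exact Ht.
    - intros t Ht.
      assert (Htz : Cmod (RtoC t * z)%C < 1)
        by (rewrite Cmod_scal_R by lra; pose proof (Cmod_ge_0 z); nra).
      destruct (radius_ge_1_ex_pseries _ _ (radius_ge_1_dcoef b Hb) Htz) as [w Hw].
      replace (PSeries (PS_derive c) t) with (Re (v * z * w)%C); [apply Rle_minus, Hd; assumption | ].
      symmetry. apply is_pseries_unique.
      eapply is_pseries_ext; [intros n; symmetry; apply PS_derive_ray_coef | ].
      apply is_pseries_ray_coef, Hw. }
  rewrite PSeries_0 in Hmv.
  replace (PSeries c 1) with (Re (v * l)%C) in Hmv
    by (symmetry; apply is_pseries_unique, is_pseries_ray_coef; rewrite Cmult_1_l; exact Hl).
  replace (c O) with (Re (v * b O)%C) in Hmv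
    by (unfold c, ray_coef; f_equal; change (@eq C (v * b O)%C (v * (b O * 1))%C); ring).
  replace (Re (v * (l - b O))%C) with (Re (v * l)%C - Re (v * b O)%C)
    by (destruct v, l, (b O); simpl; ring).
  lra.
Qed.

Lemma Cmod_le_of_Re_mult_le (d : C) (B : R) :
  (forall v, Cmod v <= 1 -> Re (v * d)%C <= B) -> Cmod d <= B.
Proof.
  intros H. destruct (Req_dec (Cmod d) 0) as [H0 | H0].
  - specialize (H 0%C ltac:(rewrite Cmod_0; lra)).
    rewrite H0. rewrite Cmult_0_l in H. exact H.
  - pose proof (Cmod_ge_0 d).
    (* [v] rotates [d] onto the positive real axis *)
    set (v := (RtoC (/ Cmod d) * Cconj d)%C).
    assert (Hv : Cmod v <= 1).
    { unfold v. rewrite Cmod_mult, Cmod_conj, Cmod_R, Rabs_pos_eq; [right; field; exact H0 | ].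
      left. apply Rinv_0_lt_compat. lra. }
    replace (Cmod d) with (Re (v * d)%C); [exact (H v Hv) | ].
    unfold v. replace (RtoC (/ Cmod d) * Cconj d * d)%C with (RtoC (/ Cmod d) * (d * Cconj d))%C by ring.
    rewrite <- Cmod2_conj, <- RtoC_mult. simpl. field. exact H0.
Qed.

Lemma pseries_increment_bound (b : nat -> C) (z l : C) (G dG : R -> R) :
  radius_ge_1 b -> Cmod z < 1 -> is_pseries b z l ->
  (forall t, 0 <= t <= 1 -> is_derive G t (dG t)) ->
  (forall t w, 0 <= t <= 1 -> is_pseries (dcoef b) (RtoC t * z)%C w ->
     Cmod z * Cmod w <= dG t) ->
  Cmod (l - b O)%C <= G 1 - G 0.
Proof.
  intros Hb Hz Hl HG Hd. apply Cmod_le_of_Re_mult_le. intros v Hv.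
  apply (Re_mult_pseries_sub_le b z v l G dG Hb Hz Hl HG).
  intros t w Ht Hw. eapply Rle_trans; [apply Rle_abs | ].
  eapply Rle_trans; [apply re_le_Cmod | ]. rewrite !Cmod_mult.
  pose proof (Hd t w Ht Hw). pose proof (Cmod_ge_0 z). pose proof (Cmod_ge_0 w).
  pose proof (Cmod_ge_0 v). assert (0 <= Cmod z * Cmod w) by (apply Rmult_le_pos; assumption).
  nra.
Qed.

(** * The Cesaro operator on the alpha-Bloch space *)

Lemma one_sub_mul_partial_sums (a : nat -> C) (w fw hw : C) :
  is_pseries a w fw -> is_pseries (sum_n a) w hw -> ((1 - w) * hw = fw)%C.
Proof.
  intros Hf Hh.
  pose proof (is_pseries_minus _ _ _ _ _ Hh (is_pseries_incr_1 _ _ _ Hh)) as H.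
  replace ((1 - w) * hw)%C with (hw - w * hw)%C by ring.
  apply (is_pseries_C_unique a w); [ | exact Hf].
  eapply is_pseries_ext; [ | exact H]. intros [|n]; unfold PS_minus, PS_incr_1; simpl.
  - rewrite sum_O. change (a O - 0 = a O)%C. ring.
  - rewrite sum_Sn. change (sum_n a n + a (S n) - sum_n a n = a (S n))%C. ring.
Qed.

Lemma one_sub_mul_dcoef_partial_sums (a : nat -> C) (w f1 hw Y : C) :
  is_pseries (dcoef a) w f1 -> is_pseries (sum_n a) w hw ->
  is_pseries (dcoef (sum_n a)) w Y -> ((1 - w) * Y = f1 + hw)%C.
Proof.
  intros Hf Hh HY.
  pose proof (is_pseries_minus _ _ _ _ _ HY (is_pseries_incr_1 _ _ _ HY)) as H.
  replace ((1 - w) * Y)%C with (Y - w * Y)%C by ring.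
  apply (is_pseries_C_unique (PS_plus (dcoef a) (sum_n a)) w);
    [ | exact (is_pseries_plus _ _ _ _ _ Hf Hh)].
  eapply is_pseries_ext; [ | exact H].
  intros [|n]; unfold PS_minus, PS_plus, PS_incr_1, dcoef; simpl; rewrite sum_Sn.
  - rewrite sum_O. change (1 * (a O + a 1%nat) - 0 = 1 * a 1%nat + a O)%C. ring.
  - change (RtoC (INR (S (S n))) * (sum_n a (S n) + a (S (S n)))
            - RtoC (INR (S n)) * sum_n a (S n)
            = RtoC (INR (S (S n))) * a (S (S n)) + sum_n a (S n))%C.
    rewrite (S_INR (S n)), RtoC_plus. ring.
Qed.

(* With [g = C f] and [h = f / (1 - z)]: [(z^2 g')' = z h'], coefficientwise. *)
Lemma dcoef_incr_2_dcoef_cesaro a m :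
  dcoef (PS_incr_1 (PS_incr_1 (dcoef (cesaro a)))) m = PS_incr_1 (dcoef (sum_n a)) m.
Proof.
  destruct m as [|k]; unfold dcoef, PS_incr_1, cesaro; simpl.
  - change (RtoC 1 * 0 = 0)%C. ring.
  - assert (Hk : INR (S (S k)) <> 0) by (apply not_0_INR; lia).
    change (RtoC (INR (S (S k))) * (RtoC (INR (S k)) * (RtoC (/ INR (S (S k))) * sum_n a (S k)))
            = RtoC (INR (S k)) * sum_n a (S k))%C.
    replace (RtoC (INR (S (S k))) * (RtoC (INR (S k)) * (RtoC (/ INR (S (S k))) * sum_n a (S k))))%C
      with (RtoC (INR (S (S k)) * / INR (S (S k))) * (RtoC (INR (S k)) * sum_n a (S k)))%C
      by (rewrite RtoC_mult; ring).
    rewrite Rinv_r by exact Hk. ring.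
Qed.

Lemma Cmod_one_sub_ge (w : C) : 1 - Cmod w <= Cmod (1 - w)%C.
Proof.
  pose proof (Cmod_triangle (1 - w)%C w) as H.
  replace (1 - w + w)%C with (RtoC 1) in H by ring. rewrite Cmod_1 in H. lra.
Qed.

Lemma cesaro_0 a : cesaro a O = a O.
Proof.
  unfold cesaro. rewrite sum_O. simpl. rewrite Rinv_1.
  change (RtoC 1 * a O = a O)%C. ring.
Qed.

Section BlochEstimates.

Variables (alpha S : R) (a : nat -> C).
Hypothesis Halpha : 1 < alpha.
Hypothesis Ha : radius_ge_1 a.
Hypothesis HS0 : 0 <= S.
Hypothesis HS : forall v w, Cmod v < 1 -> is_pseries (dcoef a) v w ->
  Rpower (1 - Cmod v ^ 2) alpha * Cmod w <= S.

Lemma bloch_dcoef_bound v w : Cmod v < 1 -> is_pseries (dcoef a) v w ->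
  Cmod w <= S * Rpower (1 - Cmod v) (- alpha).
Proof.
  intros Hv Hw. specialize (HS v w Hv Hw). pose proof (Cmod_ge_0 v). pose proof (Cmod_ge_0 w).
  assert (Rpower (1 - Cmod v) alpha <= Rpower (1 - Cmod v ^ 2) alpha)
    by (apply Rle_Rpower_l; [lra | split; nra]).
  pose proof (Rpower_gt_0 (1 - Cmod v) alpha).
  rewrite Rpower_Ropp. apply (Rmult_le_reg_l (Rpower (1 - Cmod v) alpha)); [assumption | ].
  replace (Rpower (1 - Cmod v) alpha * (S * / Rpower (1 - Cmod v) alpha)) with S by (field; lra).
  nra.
Qed.

Lemma bloch_growth_bound w fw : Cmod w < 1 -> is_pseries a w fw ->
  Cmod (fw - a O)%C <= S / (alpha - 1) * (Rpower (1 - Cmod w) (1 - alpha) - 1).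
Proof.
  intros Hw Hf. set (r := Cmod w). pose proof (Cmod_ge_0 w).
  pose proof (pseries_increment_bound a w fw
    (fun t => S / (alpha - 1) * Rpower (1 - t * r) (1 - alpha))
    (fun t => S * r * Rpower (1 - t * r) (- alpha)) Ha Hw Hf) as Hinc.
  cbv beta in Hinc. rewrite Rmult_1_l, Rmult_0_l, Rminus_0_r, Rpower_1_l in Hinc.
  rewrite Rmult_1_r in Hinc. rewrite Rmult_minus_distr_l, Rmult_1_r. apply Hinc.
  - intros t Ht. assert (0 < 1 - t * r) by (unfold r in *; nra).
    replace (S * r * Rpower (1 - t * r) (- alpha))
      with (S / (alpha - 1) * (- r * (1 - alpha) * Rpower (1 - t * r) (1 - alpha - 1)))
      by (replace (1 - alpha - 1) with (- alpha) by ring; field; lra).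
    apply (is_derive_scal (fun t => Rpower (1 - t * r) (1 - alpha))).
    apply is_derive_Rpower_one_sub_mul. assumption.
  - intros t X Ht HX.
    assert (Htw : Cmod (RtoC t * w)%C < 1) by (rewrite Cmod_scal_R by lra; unfold r in *; nra).
    pose proof (bloch_dcoef_bound _ X Htw HX) as HB.
    rewrite Cmod_scal_R in HB by lra. fold r in HB.
    replace (S * r * Rpower (1 - t * r) (- alpha)) with (r * (S * Rpower (1 - t * r) (- alpha))) by ring.
    apply Rmult_le_compat_l; assumption.
Qed.

Lemma partial_sums_dcoef_bound w Y : Cmod w < 1 -> is_pseries (dcoef (sum_n a)) w Y ->
  (1 - Cmod w) ^ 2 * Cmod Y
    <= S * alpha / (alpha - 1) * Rpower (1 - Cmod w) (1 - alpha) + (Cmod (a O) - S / (alpha - 1)).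
Proof.
  intros Hw HY.
  destruct (radius_ge_1_ex_pseries _ _ (radius_ge_1_dcoef _ Ha) Hw) as [f1 Hf1].
  destruct (radius_ge_1_ex_pseries _ _ (radius_ge_1_partial_sums _ Ha) Hw) as [hw Hhw].
  destruct (radius_ge_1_ex_pseries _ _ Ha Hw) as [fw Hfw].
  pose proof (one_sub_mul_partial_sums _ _ _ _ Hfw Hhw) as Eh.
  pose proof (one_sub_mul_dcoef_partial_sums _ _ _ _ _ Hf1 Hhw HY) as EY.
  pose proof (bloch_dcoef_bound w f1 Hw Hf1) as Bf1.
  pose proof (bloch_growth_bound w fw Hw Hfw) as Bfw.
  pose proof (Cmod_one_sub_ge w) as Hm.
  set (d := 1 - Cmod w) in *. set (m := Cmod (1 - w)%C) in *.
  assert (Hd : 0 < d) by (unfold d; lra).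
  assert (HdP : Rpower d (1 - alpha) = d * Rpower d (- alpha))
    by (rewrite <- Rpower_add_1 by exact Hd; f_equal; ring).
  assert (HY1 : m * Cmod Y <= Cmod f1 + Cmod hw)
    by (unfold m; rewrite <- Cmod_mult, EY; apply Cmod_triangle).
  assert (Hh1 : m * Cmod hw <= Cmod (a O) + Cmod (fw - a O)%C).
  { unfold m. rewrite <- Cmod_mult, Eh.
    replace fw with (a O + (fw - a O))%C at 1 by ring. apply Cmod_triangle. }
  pose proof (Cmod_ge_0 Y). pose proof (Cmod_ge_0 hw).
  assert (d * Cmod Y <= Cmod f1 + Cmod hw) by nra.
  assert (d * Cmod hw <= Cmod (a O) + Cmod (fw - a O)%C) by nra.
  assert (d * Cmod f1 <= d * (S * Rpower d (- alpha))) by (apply Rmult_le_compat_l; lra).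
  replace (S * alpha / (alpha - 1) * Rpower d (1 - alpha) + (Cmod (a O) - S / (alpha - 1)))
    with (d * (S * Rpower d (- alpha)) + (Cmod (a O) + S / (alpha - 1) * (Rpower d (1 - alpha) - 1)))
    by (rewrite HdP; field; lra).
  nra.
Qed.

Lemma dcoef_incr_2_cesaro_bound z t X : Cmod z < 1 -> 0 <= t <= 1 ->
  is_pseries (dcoef (PS_incr_1 (PS_incr_1 (dcoef (cesaro a))))) (RtoC t * z)%C X ->
  Cmod z * Cmod X <= Cmod z * Cmod z / (1 - t * Cmod z) ^ 2
    * (S / (alpha - 1) * alpha * Rpower (1 - t * Cmod z) (1 - alpha) + (Cmod (a O) - S / (alpha - 1))).
Proof.
  intros Hz Ht HX. pose proof (Cmod_ge_0 z). set (r := Cmod z) in *.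
  assert (Htz : Cmod (RtoC t * z)%C < 1) by (rewrite Cmod_scal_R by lra; fold r; nra).
  destruct (radius_ge_1_ex_pseries (dcoef (sum_n a)) _
    (radius_ge_1_dcoef _ (radius_ge_1_partial_sums _ Ha)) Htz) as [Y HY].
  assert (EX : X = (RtoC t * z * Y)%C).
  { apply (is_pseries_C_unique _ _ _ _ HX).
    eapply is_pseries_ext; [intros m; symmetry; apply dcoef_incr_2_dcoef_cesaro | ].
    exact (is_pseries_incr_1 _ _ _ HY). }
  pose proof (partial_sums_dcoef_bound _ _ Htz HY) as HB.
  rewrite Cmod_scal_R in HB by lra. fold r in HB.
  rewrite EX, !Cmod_mult, Cmod_R, Rabs_pos_eq by lra. fold r.
  set (d := 1 - t * r) in *. assert (Hd : 0 < d) by (unfold d; nra).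
  set (Q := S * alpha / (alpha - 1) * Rpower d (1 - alpha) + (Cmod (a O) - S / (alpha - 1))) in HB.
  replace (S / (alpha - 1) * alpha * Rpower d (1 - alpha) + (Cmod (a O) - S / (alpha - 1)))
    with Q by (unfold Q; field; lra).
  pose proof (Cmod_ge_0 Y).
  apply Rle_trans with (r * r * Cmod Y).
  - assert (0 <= r * (r * Cmod Y)) by (apply Rmult_le_pos; [ | apply Rmult_le_pos]; assumption).
    replace (r * (t * r * Cmod Y)) with (t * (r * (r * Cmod Y))) by ring. nra.
  - replace (r * r / d ^ 2 * Q) with (r * r * (Q / d ^ 2)) by (field; lra).
    apply Rmult_le_compat_l; [nra | ].
    apply Rle_div_r; [apply pow_lt; lra | lra].
Qed.

Lemma cesaro_dcoef_bound z gz : 0 < Cmod z < 1 -> is_pseries (dcoef (cesaro a)) z gz ->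
  Cmod z * Cmod gz <= S / (alpha - 1) * (Rpower (1 - Cmod z) (- alpha) - 1)
                     + (Cmod (a O) - S / (alpha - 1)) * (/ (1 - Cmod z) - 1).
Proof.
  intros Hz Hg. set (r := Cmod z) in *.
  set (c1 := S / (alpha - 1)). set (c2 := Cmod (a O) - S / (alpha - 1)).
  set (b := PS_incr_1 (PS_incr_1 (dcoef (cesaro a)))).
  set (G := fun t => r * (c1 * Rpower (1 - t * r) (- alpha) + c2 * Rpower (1 - t * r) (- (1)))).
  set (dG := fun t => r * r / (1 - t * r) ^ 2 * (c1 * alpha * Rpower (1 - t * r) (1 - alpha) + c2)).
  assert (Hinc : Cmod (z * (z * gz))%C <= G 1 - G 0).
  { replace (z * (z * gz))%C with (scal z (scal z gz) - b O)%C
      by (change (z * (z * gz) - 0 = z * (z * gz))%C; ring).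
    apply (pseries_increment_bound b z _ G dG).
    - apply radius_ge_1_PS_incr_1, radius_ge_1_PS_incr_1, radius_ge_1_dcoef, radius_ge_1_cesaro, Ha.
    - exact (proj2 Hz).
    - exact (is_pseries_incr_1 _ _ _ (is_pseries_incr_1 _ _ _ Hg)).
    - intros t Ht. apply is_derive_radial_majorant. nra.
    - intros t X Ht HX. exact (dcoef_incr_2_cesaro_bound z t X (proj2 Hz) Ht HX). }
  unfold G in Hinc. rewrite Rmult_1_l, Rmult_0_l, Rminus_0_r, !Rpower_1_l in Hinc.
  rewrite (Rpower_Ropp (1 - r) 1), Rpower_1 in Hinc by lra.
  rewrite !Cmod_mult in Hinc. fold r in Hinc.
  apply (Rmult_le_reg_l r); [lra | ].
  fold c1. change (Cmod (a O) - c1) with c2.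
  replace (r * (c1 * (Rpower (1 - r) (- alpha) - 1) + c2 * (/ (1 - r) - 1)))
    with (r * (c1 * Rpower (1 - r) (- alpha) + c2 * / (1 - r)) - r * (c1 * 1 + c2 * 1)) by ring.
  exact Hinc.
Qed.

Lemma cesaro_dcoef_0_bound gz : is_pseries (dcoef (cesaro a)) (RtoC 0) gz ->
  Cmod gz <= (Cmod (a O) + S) / 2.
Proof.
  intros Hg.
  rewrite (is_pseries_C_unique _ _ _ _ Hg (is_pseries_0 (V := C_NormedModule) _)).
  pose proof (HS (RtoC 0) _ ltac:(rewrite Cmod_0; lra)
    (is_pseries_0 (V := C_NormedModule) (dcoef a))) as Ha1.
  rewrite Cmod_0, pow_ne_zero, Rminus_0_r, Rpower_1_l, Rmult_1_l in Ha1 by lia.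
  unfold dcoef, cesaro in *. rewrite !Cmod_mult, !Cmod_INR, !Cmod_R in *.
  rewrite sum_Sn, sum_O. change (plus (a O) (a 1%nat)) with (a O + a 1%nat)%C.
  pose proof (Cmod_triangle (a O) (a 1%nat)).
  replace (INR 1) with 1 in * by reflexivity.
  replace (Rabs (/ INR 2)) with (/ 2) by (simpl; rewrite Rabs_pos_eq; lra).
  lra.
Qed.

Lemma cesaro_bloch_pointwise : Cmod (a O) + S <= 1 -> forall z gz, Cmod z < 1 ->
  is_pseries (dcoef (cesaro a)) z gz ->
  Cmod (a O) + Rpower (1 - Cmod z ^ 2) alpha * Cmod gz
    <= Rmax (constA alpha) (Rpower 2 alpha / (alpha - 1)).
Proof.
  intros Hnorm z gz Hz Hg. rewrite constA_constK.
  pose proof (Rmax_l (1 + constK alpha) (Rpower 2 alpha / (alpha - 1))) as HM1.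
  pose proof (Rmax_r (1 + constK alpha) (Rpower 2 alpha / (alpha - 1))) as HM2.
  set (M := Rmax (1 + constK alpha) (Rpower 2 alpha / (alpha - 1))) in *.
  pose proof (constK_ge_1 alpha Halpha). pose proof (Cmod_ge_0 (a O)).
  destruct (Req_dec (Cmod z) 0) as [Hz0 | Hz0].
  - apply Cmod_eq_0 in Hz0. subst z.
    pose proof (cesaro_dcoef_0_bound gz Hg).
    rewrite Cmod_0, pow_ne_zero, Rminus_0_r, Rpower_1_l by lia. lra.
  - pose proof (Cmod_ge_0 z).
    pose proof (weighted_bound_of_radial_bound alpha (Cmod z) (Cmod (a O)) (S / (alpha - 1)) (Cmod gz)
      Halpha ltac:(lra) (Cmod_ge_0 _) ltac:(apply Rdiv_le_0_compat; lra)
      (cesaro_dcoef_bound z gz ltac:(lra) Hg)) as HB.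
    replace (S / (alpha - 1) * Rpower 2 alpha) with (S * (Rpower 2 alpha / (alpha - 1))) in HB
      by (field; lra).
    assert (Cmod (a O) * (1 + constK alpha) <= Cmod (a O) * M) by (apply Rmult_le_compat_l; lra).
    assert (S * (Rpower 2 alpha / (alpha - 1)) <= S * M) by (apply Rmult_le_compat_l; lra).
    assert (M * (Cmod (a O) + S) <= M) by (rewrite <- (Rmult_1_r M) at 2; apply Rmult_le_compat_l; lra).
    nra.
Qed.

End BlochEstimates.

Lemma Rbar_lub_ub (E : Rbar -> Prop) x : E x -> Rbar_le x (Rbar_lub E).
Proof. intros Hx. unfold Rbar_lub. destruct (Rbar_ex_lub E) as [l [Hub Hlub]]. exact (Hub x Hx). Qed.

Lemma Rbar_lub_le (E : Rbar -> Prop) b : (forall x, E x -> Rbar_le x b) -> Rbar_le (Rbar_lub E) b.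
Proof. intros Hb. unfold Rbar_lub. destruct (Rbar_ex_lub E) as [l [Hub Hlub]]. exact (Hlub b Hb). Qed.

Lemma bloch_sup_ub alpha a S : bloch_sup alpha a = Finite S ->
  forall v w, Cmod v < 1 -> is_pseries (dcoef a) v w -> Rpower (1 - Cmod v ^ 2) alpha * Cmod w <= S.
Proof.
  intros HS v w Hv Hw.
  assert (H : Rbar_le (Rpower (1 - Cmod v ^ 2) alpha * Cmod w) (bloch_sup alpha a))
    by (apply Rbar_lub_ub; exists v; split; [exact Hv | exists w; split; [exact Hw | reflexivity]]).
  rewrite HS in H. exact H.
Qed.

Lemma bloch_sup_le alpha a B :
  (forall z w, Cmod z < 1 -> is_pseries (dcoef a) z w -> Rpower (1 - Cmod z ^ 2) alpha * Cmod w <= B) ->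
  Rbar_le (bloch_sup alpha a) B.
Proof.
  intros HB. apply Rbar_lub_le. intros x (z & Hz & w & Hw & Hx). rewrite Hx. exact (HB z w Hz Hw).
Qed.

Lemma bloch_norm_cesaro_le alpha a : 1 < alpha -> in_bloch alpha a ->
  Rbar_le (bloch_norm alpha a) 1 ->
  Rbar_le (bloch_norm alpha (cesaro a)) (Rmax (constA alpha) (Rpower 2 alpha / (alpha - 1))).
Proof.
  intros Halpha [HD Hfin] Hle. unfold bloch_norm in *.
  destruct (bloch_sup alpha a) as [S | | ] eqn:ES; try discriminate Hfin.
  simpl in Hle. pose proof (bloch_sup_ub alpha a S ES) as HS.
  assert (HS0 : 0 <= S).
  { pose proof (HS (RtoC 0) _ ltac:(rewrite Cmod_0; lra) (is_pseries_0 (V := C_NormedModule) (dcoef a))).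
    pose proof (Rpower_gt_0 (1 - Cmod (RtoC 0) ^ 2) alpha). pose proof (Cmod_ge_0 (dcoef a O)). nra. }
  pose proof (cesaro_bloch_pointwise alpha S a Halpha (radius_ge_1_of_in_HD a HD) HS0 HS Hle) as Hpt.
  set (M := Rmax (constA alpha) (Rpower 2 alpha / (alpha - 1))) in *.
  assert (Hsup : Rbar_le (bloch_sup alpha (cesaro a)) (M - Cmod (a O))).
  { apply bloch_sup_le. intros z w Hz Hw. pose proof (Hpt z w Hz Hw). lra. }
  rewrite cesaro_0.
  destruct (bloch_sup alpha (cesaro a)) as [y | | ]; simpl in *; [lra | contradiction | exact I].
Qed.

Lemma cesaro_opnorm_le alpha : 1 < alpha ->
  Rbar_le (cesaro_opnorm alpha) (Rmax (constA alpha) (Rpower 2 alpha / (alpha - 1))).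
Proof.
  intros Halpha. apply Rbar_lub_le. intros x (a & Ha & Hle & Hx). rewrite Hx.
  exact (bloch_norm_cesaro_le alpha a Halpha Ha Hle).
Qed.

Lemma two_mul_le_Rpower_2 alpha : 2 <= alpha -> 2 * alpha <= Rpower 2 alpha.
Proof.
  intros Ha. replace alpha with (2 + (alpha - 2)) at 2 by ring. rewrite Rpower_plus.
  replace (Rpower 2 2) with 4
    by (replace 2 with (INR 2) at 2 by reflexivity; rewrite Rpower_pow by lra; simpl; ring).
  pose proof (exp_ineq1_le ((alpha - 2) * ln 2)). pose proof ln_lt_2. unfold Rpower. nra.
Qed.

Lemma Rpower_2_div_le alpha : 2 <= alpha ->
  Rpower 2 alpha / (alpha - 1) <= Rpower 2 alpha * (Rpower 2 alpha - alpha - 1) / (alpha - 1) ^ 2.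
Proof.
  intros Ha. pose proof (two_mul_le_Rpower_2 alpha Ha). pose proof (Rpower_gt_0 2 alpha).
  replace (Rpower 2 alpha * (Rpower 2 alpha - alpha - 1) / (alpha - 1) ^ 2)
    with (Rpower 2 alpha / (alpha - 1) * ((Rpower 2 alpha - alpha - 1) / (alpha - 1))) by (field; lra).
  rewrite <- (Rmult_1_r (Rpower 2 alpha / (alpha - 1))) at 1.
  apply Rmult_le_compat_l; [apply Rdiv_le_0_compat; lra | apply Rle_div_r; lra].
Qed.

Theorem theorem6p2 (alpha : R) (halpha : 1 < alpha) :
  Rbar_le (cesaro_opnorm alpha)
    (Finite (if Rle_dec alpha 2
             then Rmax (constA alpha) (Rpower 2 alpha / (alpha - 1))
             else Rmax (constA alpha)
                    (Rpower 2 alpha * (Rpower 2 alpha - alpha - 1) / (alpha - 1) ^ 2))).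
Proof.
  eapply Rbar_le_trans; [exact (cesaro_opnorm_le alpha halpha) | ].
  simpl. destruct (Rle_dec alpha 2) as [_ | Hgt]; [apply Rle_refl | ].
  apply Rle_max_compat_l, Rpower_2_div_le. lra.
Qed.
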